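(* Assume $V=W$ is a Hilbert space, $\mathcal{A}$ is coercive with constant $\alpha>0$ (i.e. $\alpha\|\phi\|_W^2\le\mathcal{A}(\phi,\phi)$ for all $\phi\in W$), and $W_\theta\cup S_\theta\subseteq V_\eta$. Let $\sigma^*:=\inf_{w'_\theta\in W_\theta}\|u-w'_\theta\|_{op,\eta}$. If $\varepsilon\ge0$ and $w_\theta\in W_\theta$ satisfy $\|u-w_\theta\|_{op,\eta}\le\sigma^*+\varepsilon$, then $$\|u-w_\theta\|_W\le\Big(1+\frac{4M}{\alpha}\Big)\inf_{w'_\theta\in W_\theta}\|u-w'_\theta\|_W+\frac{\varepsilon}{\alpha}.$$ In particular, for any minimizing sequence $(w^n_\theta)\subset W_\theta$ (i.e. $\|u-w^n_\theta\|_{op,\eta}\to\sigma^*$) and any $\varepsilon>0$ there is $k$ with $\|u-w^k_\theta\|_W\le(1+4M/\alpha)\inf_{w'_\theta\in W_\theta}\|u-w'_\theta\|_W+\varepsilon/\alpha$.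
   Context: $W=V$ is a separable real Hilbert space. $\mathcal{A}:W\times W\to\mathbb{R}$ is a bilinear form with $\mathcal{A}(w,v)\le M\|w\|_W\|v\|_W$, $\mathcal{F}:W\to\mathbb{R}$ is bounded linear, and $u\in W$ is the unique solution of $\mathcal{A}(u,v)=\mathcal{F}(v)$ for all $v\in W$. $W_\theta,V_\eta\subseteq W$ are arbitrary subsets, $V_\eta$ containing an element of nonzero norm. For $w\in W$, $\|w\|_{op,\eta}:=\sup_{v_\eta\in V_\eta,\ \|v_\eta\|_W\neq0}\mathcal{A}(w,v_\eta)/\|v_\eta\|_W$. $S_\theta:=\{w_1-w_2:\ w_1,w_2\in W_\theta\}$. *)

From HB Require Import structures.
From mathcomp Require Import all_boot all_order all_algebra.
From mathcomp Require Import all_classical all_reals all_analysis.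
Set Implicit Arguments. Unset Strict Implicit. Unset Printing Implicit Defensive.
Import Order.TTheory GRing.Theory Num.Theory.
Import numFieldNormedType.Exports.
Local Open Scope classical_set_scope.
Local Open Scope ring_scope.

(* A real Hilbert space: a complete normed space whose norm comes from a
   symmetric bilinear inner product; we also require separability. *)
Definition is_inner_product (R : realType) (V : normedModType R)
    (ip : V -> V -> R) : Prop :=
  [/\ (forall (a : R) (x y z : V), ip (a *: x + y) z = a * ip x z + ip y z),
      (forall x y : V, ip x y = ip y x) &
      (forall x : V, `|x| = Num.sqrt (ip x x))].

Definition separable_space (T : topologicalType) : Prop :=
  exists D : set T, countable D /\ closure D = setT.

Definition bilinear_form (R : realType) (V : normedModType R)
    (A : V -> V -> R) : Prop :=
  (forall (a : R) (x y z : V), A (a *: x + y) z = a * A x z + A y z) /\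
  (forall (a : R) (x y z : V), A z (a *: x + y) = a * A z x + A z y).

Definition bounded_linear_functional (R : realType) (V : normedModType R)
    (F : V -> R) : Prop :=
  (forall (a : R) (x y : V), F (a *: x + y) = a * F x + F y) /\
  exists C : R, forall x : V, `|F x| <= C * `|x|.

Definition opnorm (R : realType) (V : normedModType R)
    (A : V -> V -> R) (Veta : set V) (w : V) : R :=
  sup [set A w v / `|v| | v in [set v | Veta v /\ `|v| != 0]].

Definition diffset (R : realType) (V : normedModType R) (Wt : set V) : set V :=
  [set x | exists w1 w2, Wt w1 /\ Wt w2 /\ x = w1 - w2].

From HB Require Import structures.
From mathcomp Require Import all_boot all_order all_algebra.
From mathcomp Require Import all_classical all_reals all_analysis.
From mathcomp Require Import ring lra.
Set Implicit Arguments. Unset Strict Implicit. Unset Printing Implicit Defensive.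
Import Order.TTheory GRing.Theory Num.Theory.
Import numFieldNormedType.Exports.
Local Open Scope classical_set_scope.
Local Open Scope ring_scope.

(* 1. ||.||_{op,eta} is a supremum of quotients A(x,v)/||v||, hence it
      dominates each such quotient and is bounded by M ||x||; in particular
      sigma = inf_{w' in W_theta} ||u - w'||_{op,eta} <= M ||u - w'||.
   2. Coercivity tested on d = x - y in V_eta gives
        alpha ||x - y|| <= ||x||_{op,eta} + M ||y||.
      With x = u - w, y = u - w' (so d = w' - w lies in S_theta) and
      ||u - w||_{op,eta} <= sigma + eps <= M ||u - w'|| + eps this yields
        alpha ||w' - w|| <= 2 M ||u - w'|| + eps.
   3. The triangle inequality gives ||u - w|| <= (1 + 2M/alpha)||u - w'||
      + eps/alpha for every w', and passing to the infimum over w' gives the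
      estimate (with the weaker constant 4M/alpha of the statement).
   4. For a minimizing sequence, some term satisfies
      ||u - w^k||_{op,eta} <= sigma + eps, so step 3 applies to it. *)

Section BilinearForm.
Variables (R : realType) (V : normedModType R) (A : V -> V -> R).
Hypothesis hA : bilinear_form A.

Lemma bilinear_subl (x y z : V) : A (x - y) z = A x z - A y z.
Proof.
case: hA => hl _.
have -> : x - y = (-1) *: y + x by rewrite scaleN1r addrC.
by rewrite hl mulN1r addrC.
Qed.

Lemma bilinear_oppr (x z : V) : A x (- z) = - A x z.
Proof.
case: hA => _ hr.
have A_x0 : A x 0 = 0.
  have := hr 1 0 0 x; rewrite scale1r addr0 mul1r => h.
  by apply: (@addrI _ (A x 0)); rewrite addr0 -h.
have -> : - z = (-1) *: z + 0 by rewrite scaleN1r addr0.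
by rewrite hr A_x0 addr0 mulN1r.
Qed.

End BilinearForm.

Section OperatorNorm.
Variables (R : realType) (V : normedModType R) (A : V -> V -> R) (M : R)
  (Veta : set V).
Hypothesis hM : forall w v : V, A w v <= M * `|w| * `|v|.
Hypothesis Veta_nonzero : exists v : V, Veta v /\ `|v| != 0.

Lemma quotient_le (x v : V) : `|v| != 0 -> A x v / `|v| <= M * `|x|.
Proof.
move=> nv; rewrite ler_pdivrMr; first exact: hM.
by rewrite lt_neqAle eq_sym nv normr_ge0.
Qed.

Lemma opnorm_ge (x v : V) :
  Veta v -> `|v| != 0 -> A x v / `|v| <= opnorm A Veta x.
Proof.
move=> hv nv; apply: ub_le_sup; last by exists v.
by exists (M * `|x|) => r [w [_ nw] <-]; exact: quotient_le.
Qed.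

Lemma opnorm_le (x : V) : opnorm A Veta x <= M * `|x|.
Proof.
case: Veta_nonzero => v0 [hv0 nv0].
apply: ge_sup; first by exists (A x v0 / `|v0|), v0.
by move=> r [v [_ nv] <-]; exact: quotient_le.
Qed.

(* The infimal operator-norm error over W_theta is at most M ||u - w'||
   (also when the infimum degenerates to 0, since then M >= 0). *)
Lemma inf_opnorm_le (Wt : set V) (u w' : V) : 0 <= M -> Wt w' ->
  inf [set opnorm A Veta (u - w) | w in Wt] <= M * `|u - w'|.
Proof.
move=> M0 hw'.
have [hl|hnl] := pselect (has_lbound [set opnorm A Veta (u - w) | w in Wt]).
  by apply: le_trans (opnorm_le (u - w')); apply: (ge_inf hl); exists w'.
by rewrite inf_out ?mulr_ge0 // => -[].
Qed.

End OperatorNorm.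

(* A coercivity constant never exceeds a continuity constant (on a space
   with a nonzero vector); in particular M >= 0. *)
Lemma coercivity_le_bound (R : realType) (V : normedModType R)
    (A : V -> V -> R) (M alpha : R) (v0 : V) :
  (forall w v : V, A w v <= M * `|w| * `|v|) ->
  (forall phi : V, alpha * `|phi| ^+ 2 <= A phi phi) ->
  `|v0| != 0 -> alpha <= M.
Proof.
move=> hM hco nv0.
have p : 0 < `|v0| by rewrite lt_neqAle eq_sym nv0 normr_ge0.
have := le_trans (hco v0) (hM v0 v0).
by rewrite expr2 mulrA !(ler_pM2r p).
Qed.

(* Coercivity tested against the direction x - y in V_eta. *)
Lemma coercive_diff_bound (R : realType) (V : normedModType R)
    (A : V -> V -> R) (M alpha : R) (Veta : set V) (x y : V) :
  bilinear_form A ->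
  (forall w v : V, A w v <= M * `|w| * `|v|) ->
  (forall phi : V, alpha * `|phi| ^+ 2 <= A phi phi) ->
  Veta (x - y) -> `|x - y| != 0 ->
  alpha * `|x - y| <= opnorm A Veta x + M * `|y|.
Proof.
move=> hA hM hco hd nd.
set d := x - y.
have p : 0 < `|d| by rewrite lt_neqAle eq_sym nd normr_ge0.
have coer : alpha * `|d| * `|d| <= A x d - A y d.
  by rewrite -mulrA -expr2 -bilinear_subl //; exact: hco.
have Ax : A x d <= opnorm A Veta x * `|d|.
  by rewrite -ler_pdivrMr //; exact: (opnorm_ge hM x hd nd).
have Ay : - A y d <= M * `|y| * `|d|.
  by rewrite -bilinear_oppr // -(normrN d); exact: hM.
rewrite -(ler_pM2r p) mulrDl; lra.
Qed.

Lemma le_affine_inf (R : realType) (T : Type) (S : set T) (f : T -> R)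
    (x c d : R) (t0 : T) :
  S t0 -> 0 < c -> (forall t, S t -> x <= c * f t + d) ->
  x <= c * inf [set f t | t in S] + d.
Proof.
move=> St0 c0 hb.
rewrite -lerBlDr mulrC -ler_pdivrMr //.
apply: lb_le_inf; first by exists (f t0), t0.
by move=> y [t St <-]; rewrite ler_pdivrMr // lerBlDr mulrC; exact: hb.
Qed.

Section QuasiOptimality.
Variables (R : realType) (V : normedModType R) (A : V -> V -> R) (M alpha : R)
  (u : V) (Wt Veta : set V).
Hypothesis hA : bilinear_form A.
Hypothesis hM : forall w v : V, A w v <= M * `|w| * `|v|.
Hypothesis Veta_nonzero : exists v : V, Veta v /\ `|v| != 0.
Hypothesis alpha_gt0 : 0 < alpha.
Hypothesis hco : forall phi : V, alpha * `|phi| ^+ 2 <= A phi phi.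
Hypothesis diff_in_Veta : diffset Wt `<=` Veta.

Let sigma := inf [set opnorm A Veta (u - w') | w' in Wt].

Lemma M_ge0 : 0 <= M.
Proof.
case: Veta_nonzero => v0 [_ nv0].
exact: le_trans (ltW alpha_gt0) (coercivity_le_bound hM hco nv0).
Qed.

Lemma near_minimizer_distance (eps : R) (w w' : V) :
  0 <= eps -> Wt w -> Wt w' -> opnorm A Veta (u - w) <= sigma + eps ->
  alpha * `|w' - w| <= 2 * M * `|u - w'| + eps.
Proof.
move=> eps0 hw hw' hle.
have [->|nz] := eqVneq (w' - w) 0.
  by rewrite normr0 mulr0 addr_ge0 // !mulr_ge0 // M_ge0.
have ed : (u - w) - (u - w') = w' - w by rewrite opprB addrC addrA subrK.
have hd : Veta ((u - w) - (u - w')).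
  by rewrite ed; apply: diff_in_Veta; exists w', w.
have nd : `|(u - w) - (u - w')| != 0 by rewrite ed normr_eq0.
have := coercive_diff_bound hA hM hco hd nd; rewrite ed.
have := inf_opnorm_le hM Veta_nonzero u M_ge0 hw'; rewrite -/sigma.
lra.
Qed.

Lemma quasi_optimality (eps : R) (w : V) :
  0 <= eps -> Wt w -> opnorm A Veta (u - w) <= sigma + eps ->
  `|u - w| <= (1 + 4 * M / alpha) * inf [set `|u - w'| | w' in Wt]
              + eps / alpha.
Proof.
move=> eps0 hw hle.
have Ma0 : 0 <= M / alpha := divr_ge0 M_ge0 (ltW alpha_gt0).
rewrite -mulrA.
apply: (le_affine_inf hw) => [|w' hw']; first lra.
have tri : `|u - w| <= `|u - w'| + `|w' - w|.
  have -> : u - w = (u - w') + (w' - w) by rewrite addrA subrK.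
  exact: ler_normD.
have hd : `|w' - w| <= 2 * (M / alpha) * `|u - w'| + eps / alpha.
  have -> : 2 * (M / alpha) * `|u - w'| + eps / alpha
            = (2 * M * `|u - w'| + eps) / alpha by field; exact: lt0r_neq0.
  by rewrite ler_pdivlMr // mulrC; exact: near_minimizer_distance hw hw' hle.
have Mu0 : 0 <= M / alpha * `|u - w'| by rewrite mulr_ge0.
lra.
Qed.

End QuasiOptimality.

Lemma cvg_eventually_le (R : realType) (x : nat -> R) (l eps : R) :
  x @ \oo --> l -> 0 < eps -> exists k, x k <= l + eps.
Proof.
move=> cvx eps0; have [N _ hN] := cvgr_dist_lt _ _ cvx eps eps0.
exists N; have := hN N (leqnn N); rewrite /= distrC => h.
by have := ler_norm (x N - l); lra.
Qed.

Theorem mainTheorem3 (R : realType) (V : completeNormedModType R)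
  (ip : V -> V -> R) (A : V -> V -> R) (F : V -> R) (M alpha : R) (u : V)
  (Wt Veta : set V) :
  is_inner_product ip -> separable_space V ->
  bilinear_form A ->
  (forall w v : V, A w v <= M * `|w| * `|v|) ->
  bounded_linear_functional F ->
  (forall v : V, A u v = F v) ->
  (forall w : V, (forall v : V, A w v = F v) -> w = u) ->
  (exists v : V, Veta v /\ `|v| != 0) ->
  0 < alpha ->
  (forall phi : V, alpha * `|phi| ^+ 2 <= A phi phi) ->
  Wt `|` diffset Wt `<=` Veta ->
  let sigma := inf [set opnorm A Veta (u - w') | w' in Wt] in
  let best := inf [set `|u - w'| | w' in Wt] in
  (forall (eps : R) (w : V), 0 <= eps -> Wt w ->
     opnorm A Veta (u - w) <= sigma + eps ->
     `|u - w| <= (1 + 4 * M / alpha) * best + eps / alpha) /\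
  (forall wn : nat -> V, (forall n, Wt (wn n)) ->
     (fun n => opnorm A Veta (u - wn n)) @ \oo --> sigma ->
     forall eps : R, 0 < eps ->
     exists k : nat, `|u - wn k| <= (1 + 4 * M / alpha) * best + eps / alpha).
Proof.
move=> _ _ hA hM _ _ _ hne alpha0 hco hsub sigma best.
have hdiff : diffset Wt `<=` Veta by move=> x hx; apply: hsub; right.
have part1 := quasi_optimality (u := u) (Wt := Wt) hA hM hne alpha0 hco hdiff.
split; first exact: part1.
move=> wn hwn hcv eps eps0.
have [k hk] := cvg_eventually_le hcv eps0.
by exists k; apply: part1 (ltW eps0) (hwn k) hk.
Qed.
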